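(* For every fixed integer $r\geq 1$ and every $\epsilon>0$, for all sufficiently large $k$, $$AW(k;r)\geq \frac{k^{2r-1-\epsilon}}{2^{r-1}(40r)^{r^2-1}}.$$
   Context: A sequence of positive integers $w_1<\dots<w_n$ is an ascending wave if $w_{i+1}-w_i \geq w_i-w_{i-1}$ for $2\le i\le n-1$. For positive integers $k,r$, $AW(k;r)$ denotes the least positive integer $N$ such that every $r$-coloring of $\{1,\dots,N\}$ contains a $k$-term monochromatic ascending wave. *)

From Stdlib Require Import Reals Arith Lia.

Definition ascending_wave (k : nat) (w : nat -> nat) : Prop :=
  (forall i, i < k -> 1 <= w i) /\
  (forall i, i + 1 < k -> w i < w (i + 1)) /\
  (forall i, 1 <= i -> i + 1 < k -> w (i + 1) - w i >= w i - w (i - 1)).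

Definition AW_prop (k r N : nat) : Prop :=
  forall c : nat -> nat,
    (forall x, 1 <= x <= N -> c x < r) ->
    exists w : nat -> nat,
      ascending_wave k w /\
      (forall i, i < k -> w i <= N) /\
      (forall i j, i < k -> j < k -> c (w i) = c (w j)).

(* AW(k;r) = least positive N with AW_prop k r N.  "AW(k;r) >= x" is stated as:
   every positive N with the property satisfies N >= x (equivalent for the
   least such N, which exists). *)
Definition AW_ge (k r : nat) (x : R) : Prop :=
  forall N : nat, 1 <= N -> AW_prop k r N -> (x <= INR N)%R.

From Stdlib Require Import Reals Lia Psatz ZArith List Classical_Prop.
Open Scope R_scope.

(* Induction on r.  Given a coloring of [1, M] with r - 1 colors and no
   monochromatic ascending wave of length k', cut [1, N] into the cells on which
   the integer part of phi x = (2 N x + x^2) / (2 N M) is constant; every cell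
   has fewer than M points.  Color each cell by a copy of the old coloring,
   skipping the color (cell index mod r).  A monochromatic wave of color c then
   never enters a cell whose index is c mod r.  While the increments of phi along
   the wave are below 1 it moves at most one cell per step, so it meets at most
   r - 1 cells and has fewer than (r - 1) k' terms there.  Afterwards the
   increments d grow, since phi along a wave has second differences >= kappa d^2.
   By Dirichlet, q d stays within 1/2 of a multiple of r for some q <= 2 r, and
   as long as this lasts (a phase) sampling phi every q steps gives a convex walk
   trapped between two forbidden residue intervals, so a phase has at most
   4 r + O(lam / d) terms and ends with d increased by 1/(4 r).  Summing over the
   phases bounds the rest of the wave by O(r^2 lam log lam) terms. *)

Lemma ln_le_sub1 x : 0 < x -> ln x <= x - 1.
Proof.
  intros Hx. pose proof (exp_ineq1_le (ln x)) as H.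
  rewrite exp_ln in H by lra. lra.
Qed.

Lemma ln_sub_ln_ge a b : 0 < b -> b < a -> (a - b) / a <= ln a - ln b.
Proof.
  intros Hb Hab.
  assert (H := ln_le_sub1 (b / a) ltac:(apply Rdiv_lt_0_compat; lra)).
  unfold Rdiv in H. rewrite ln_mult, ln_Rinv in H by (try apply Rinv_0_lt_compat; lra).
  replace (b * / a - 1) with (- ((a - b) / a)) in H by (field; lra). lra.
Qed.

Section Second_differences.
Variables (y : nat -> R) (h : R) (n : nat).
Hypothesis second_difference_ge : forall t, (t + 2 <= n)%nat ->
  y (t + 2)%nat - y (t + 1)%nat - (y (t + 1)%nat - y t) >= h.

Lemma first_difference_ge j t : (t + j + 1 <= n)%nat ->
  y (t + j + 1)%nat - y (t + j)%nat >= y (t + 1)%nat - y t + INR j * h.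
Proof.
  induction j as [|j IH]; intros Ht.
  - rewrite Nat.add_0_r. simpl. lra.
  - specialize (IH ltac:(lia)).
    pose proof (second_difference_ge (t + j) ltac:(lia)) as Hsecond.
    replace (t + j + 2)%nat with (t + S j + 1)%nat in Hsecond by lia.
    replace (t + j + 1)%nat with (t + S j)%nat in Hsecond, IH by lia.
    rewrite S_INR. lra.
Qed.

Lemma midpoint_defect_ge m : (2 * m <= n)%nat ->
  y 0%nat + y (2 * m)%nat - 2 * y m >= INR m * INR m * h.
Proof.
  intros Hm.
  assert (Hhalf : forall i, (i <= m)%nat ->
    y (m + i)%nat - y m >= y i - y 0%nat + INR i * INR m * h).
  { induction i as [|i IH]; intros Hi.
    - rewrite Nat.add_0_r. simpl. lra.
    - specialize (IH ltac:(lia)).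
      pose proof (first_difference_ge m i ltac:(lia)) as Hinc.
      replace (i + m + 1)%nat with (m + S i)%nat in Hinc by lia.
      replace (i + m)%nat with (m + i)%nat in Hinc by lia.
      replace (i + 1)%nat with (S i) in Hinc by lia.
      rewrite S_INR. lra. }
  specialize (Hhalf m (le_n m)).
  replace (m + m)%nat with (2 * m)%nat in Hhalf by lia. lra.
Qed.

End Second_differences.

Definition floor_mod (r : nat) (y : R) : Z := (Int_part y mod Z.of_nat r)%Z.

Lemma Int_part_of_bounds y z : IZR z <= y < IZR z + 1 -> Int_part y = z.
Proof. intros H. symmetry. apply Int_part_spec. lra. Qed.

Lemma Int_part_add_IZR y z : Int_part (y + IZR z) = (Int_part y + z)%Z.
Proof.
  apply Int_part_of_bounds. destruct (base_Int_part y). rewrite plus_IZR. lra.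
Qed.

Lemma Int_part_le_succ x y : y < x + 1 -> (Int_part y <= Int_part x + 1)%Z.
Proof.
  intros H. destruct (base_Int_part y) as [Hy _]. destruct (base_Int_part x) as [_ Hx].
  enough (Int_part y < Int_part x + 2)%Z by lia.
  apply lt_IZR. rewrite plus_IZR. simpl. lra.
Qed.

Lemma Int_part_INR_div a u : (0 < u)%nat -> Int_part (INR a / INR u) = Z.of_nat (a / u).
Proof.
  intros Hu. apply Int_part_of_bounds. rewrite <- INR_IZR_INZ.
  assert (Hur : 0 < INR u) by (apply lt_0_INR; lia).
  pose proof (Nat.div_mod_eq a u) as Hdiv. pose proof (Nat.mod_upper_bound a u ltac:(lia)).
  assert (Ha : INR a = INR u * INR (a / u) + INR (a mod u)).
  { rewrite Hdiv at 1. rewrite plus_INR, mult_INR. reflexivity. }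
  assert (Hfrac : 0 <= INR (a mod u) / INR u < 1).
  { split; [apply Rmult_le_pos; [apply pos_INR|left; apply Rinv_0_lt_compat; lra]|].
    apply (Rmult_lt_reg_r (INR u)); [lra|]. unfold Rdiv. rewrite Rmult_assoc, Rinv_l by lra.
    rewrite Rmult_1_r, Rmult_1_l. apply lt_INR. lia. }
  replace (INR a / INR u) with (INR (a / u) + INR (a mod u) / INR u) by (rewrite Ha; field; lra).
  lra.
Qed.

Lemma floor_mod_add_mul r y w : (0 < r)%nat ->
  floor_mod r (y + IZR (Z.of_nat r * w)) = floor_mod r y.
Proof.
  intros Hr. unfold floor_mod. rewrite Int_part_add_IZR, Z.mul_comm, Z.mod_add by lia.
  reflexivity.
Qed.

(* The unit intervals [w, w + 1) with w = c (mod r) are forbidden; a walk with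
   steps shorter than 1 cannot jump over one, so it is trapped between two
   consecutive ones. *)
Lemma walk_confined (r c : nat) (y : nat -> R) (n : nat) :
  (0 < r)%nat -> (c < r)%nat ->
  (forall t, (t <= n)%nat -> floor_mod r (y t) <> Z.of_nat c) ->
  (forall t, (t < n)%nat -> Rabs (y (S t) - y t) < 1) ->
  exists z : Z, forall t, (t <= n)%nat -> IZR z + 1 <= y t < IZR z + INR r.
Proof.
  intros Hr Hc Havoid Hstep.
  assert (Hforbidden : forall t w, (t <= n)%nat -> (w mod Z.of_nat r = Z.of_nat c)%Z ->
    ~ (IZR w <= y t < IZR w + 1)).
  { intros t w Ht Hw Hin. apply (Havoid t Ht). unfold floor_mod.
    rewrite (Int_part_of_bounds _ _ Hin). exact Hw. }
  set (z0 := Int_part (y 0%nat)).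
  set (z := (z0 - (z0 - Z.of_nat c) mod Z.of_nat r)%Z).
  pose proof (Z.mod_pos_bound (z0 - Z.of_nat c) (Z.of_nat r) ltac:(lia)) as Hmod.
  assert (Hz : (z mod Z.of_nat r = Z.of_nat c)%Z).
  { unfold z. rewrite Zminus_mod, Zmod_mod, <- Zminus_mod.
    replace (z0 - (z0 - Z.of_nat c))%Z with (Z.of_nat c) by lia.
    apply Z.mod_small. lia. }
  assert (Hzr : ((z + 1 * Z.of_nat r) mod Z.of_nat r = Z.of_nat c)%Z)
    by (rewrite Z.mod_add; lia).
  rewrite Z.mul_1_l in Hzr.
  exists z. induction t as [|t IH]; intros Ht.
  - destruct (base_Int_part (y 0%nat)) as [Hlo Hhi]. fold z0 in Hlo, Hhi.
    assert (Hz0 : z <> z0).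
    { intros E. apply (Hforbidden 0%nat z Ht Hz). rewrite E. lra. }
    assert (Hbounds : (z + 1 <= z0 <= z + Z.of_nat r - 1)%Z) by (unfold z in *; lia).
    destruct Hbounds as [Hb1 Hb2].
    apply IZR_le in Hb1, Hb2. rewrite plus_IZR in Hb1.
    rewrite minus_IZR, plus_IZR, <- INR_IZR_INZ in Hb2. lra.
  - specialize (IH ltac:(lia)). specialize (Hstep t ltac:(lia)). apply Rabs_def2 in Hstep.
    split.
    + destruct (Rle_or_lt (IZR z + 1) (y (S t))) as [|Hlt]; [assumption|].
      exfalso. apply (Hforbidden (S t) z Ht Hz). lra.
    + destruct (Rlt_or_le (y (S t)) (IZR z + INR r)) as [|Hge]; [assumption|].
      exfalso. apply (Hforbidden (S t) _ Ht Hzr).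
      rewrite plus_IZR, <- INR_IZR_INZ. lra.
Qed.

Lemma pigeonhole_nat n (f : nat -> nat) : (forall i, (i <= n)%nat -> (f i < n)%nat) ->
  exists i j, (i < j <= n)%nat /\ f i = f j.
Proof.
  intros Hf. apply NNPP. intros Hno.
  assert (Hinj : ForallPairs (fun x y => f x = f y -> x = y) (seq 0 (S n))).
  { intros x y Hx Hy Exy. apply in_seq in Hx, Hy.
    destruct (lt_eq_lt_dec x y) as [[Hxy|Hxy]|Hxy]; [|exact Hxy|];
      exfalso; apply Hno; [exists x, y | exists y, x]; split; auto; lia. }
  assert (Hincl : incl (map f (seq 0 (S n))) (seq 0 n)).
  { intros v Hv. apply in_map_iff in Hv as [x [<- Hx]]. apply in_seq in Hx.
    apply in_seq. specialize (Hf x ltac:(lia)). lia. }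
  pose proof (NoDup_incl_length (NoDup_map_NoDup_ForallPairs f Hinj (seq_NoDup _ _)) Hincl) as Hlen.
  rewrite length_map, !length_seq in Hlen. lia.
Qed.

Lemma dirichlet_approximation (beta : R) (M : nat) : (1 <= M)%nat ->
  exists q : nat, (1 <= q <= M)%nat /\ exists m : Z, Rabs (INR q * beta - IZR m) < / INR M.
Proof.
  intros HM.
  set (frac j := INR j * beta - IZR (Int_part (INR j * beta))).
  assert (Hfrac : forall j, 0 <= frac j < 1).
  { intros j. unfold frac. destruct (base_Int_part (INR j * beta)). lra. }
  assert (HMpos : 0 < INR M) by (apply lt_0_INR; lia).
  set (box j := Z.to_nat (Int_part (INR M * frac j))).
  assert (Hbox : forall j, INR (box j) <= INR M * frac j < INR (box j) + 1).
  { intros j. unfold box. destruct (base_Int_part (INR M * frac j)) as [B1 B2].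
    assert (0 <= INR M * frac j) by (specialize (Hfrac j); nra).
    assert (Hnn : (0 <= Int_part (INR M * frac j))%Z).
    { enough (-1 < Int_part (INR M * frac j))%Z by lia. apply lt_IZR. lra. }
    rewrite INR_IZR_INZ, Z2Nat.id by exact Hnn. lra. }
  assert (Hbox_lt : forall j, (j <= M)%nat -> (box j < M)%nat).
  { intros j _. apply INR_lt. specialize (Hbox j). specialize (Hfrac j). nra. }
  destruct (pigeonhole_nat M box Hbox_lt) as [j1 [j2 [Hj E]]].
  exists (j2 - j1)%nat. split; [lia|].
  exists (Int_part (INR j2 * beta) - Int_part (INR j1 * beta))%Z.
  pose proof (Hbox j1) as B1. pose proof (Hbox j2) as B2. rewrite E in B1.
  replace (INR (j2 - j1) * beta - IZR (Int_part (INR j2 * beta) - Int_part (INR j1 * beta)))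
    with (frac j2 - frac j1) by (unfold frac; rewrite minus_INR, minus_IZR by lia; ring).
  apply Rabs_def1; apply (Rmult_lt_reg_l (INR M)); try lra.
  - rewrite Rinv_r by lra. nra.
  - replace (INR M * - / INR M) with (-1) by (field; lra). nra.
Qed.

Lemma first_failure (P : nat -> Prop) s e : (s <= e)%nat ->
  (forall i, (s <= i < e)%nat -> P i) \/
  (exists j, (s <= j < e)%nat /\ ~ P j /\ forall i, (s <= i < j)%nat -> P i).
Proof.
  intros Hse. induction e as [|e IH].
  - left. intros; lia.
  - destruct (Nat.eq_dec s (S e)) as [->|Hne]; [left; intros; lia|].
    destruct (IH ltac:(lia)) as [Hall|[j [Hj [Hnj Hbefore]]]].
    + destruct (classic (P e)) as [He|He].
      * left. intros i Hi. destruct (Nat.eq_dec i e) as [->|]; [exact He|apply Hall; lia].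
      * right. exists e. repeat split; auto; lia.
    + right. exists j. repeat split; auto; lia.
Qed.

(** * Convex walks avoiding a residue class *)

Definition increment (phi : nat -> R) (i : nat) : R := phi (S i) - phi i.

Lemma sum_increments_ge phi a q lo :
  (forall j, (j < q)%nat -> lo <= increment phi (a + j)) ->
  INR q * lo <= phi (a + q)%nat - phi a.
Proof.
  induction q as [|q IH]; intros H.
  - rewrite Nat.add_0_r. simpl. lra.
  - specialize (IH (fun j Hj => H j ltac:(lia))). specialize (H q ltac:(lia)).
    unfold increment in H. replace (a + S q)%nat with (S (a + q)) by lia.
    rewrite S_INR. lra.
Qed.

Lemma sum_increments_lt phi a q hi : (1 <= q)%nat ->
  (forall j, (j < q)%nat -> increment phi (a + j) < hi) ->
  phi (a + q)%nat - phi a < INR q * hi.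
Proof.
  induction q as [|q IH]; intros Hq H; [lia|].
  pose proof (H q ltac:(lia)) as Hq'. unfold increment in Hq'.
  replace (a + S q)%nat with (S (a + q)) by lia. rewrite S_INR.
  destruct (Nat.eq_dec q 0) as [->|Hq0].
  - rewrite Nat.add_0_r in *. simpl. lra.
  - specialize (IH ltac:(lia) (fun j Hj => H j ltac:(lia))). lra.
Qed.

Definition phase_gain (r : nat) : R := / (4 * INR r).

(* A run of increments in [al, A) has at most (A - al) / phase_gain r + 1
   phases, each costing 4 r (hence the linear term) plus c0 / d, which the
   logarithmic term pays for. *)
Definition phase_budget (r : nat) (c0 A al : R) : R :=
  16 * INR r * INR r * (A - al + phase_gain r)
  + 4 * INR r * c0 * (ln A - ln (al - phase_gain r)).

Lemma phase_gain_bounds r : (1 <= r)%nat -> 0 < phase_gain r <= / 4.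
Proof.
  intros Hr. unfold phase_gain. assert (1 <= INR r) by (apply (le_INR 1); lia).
  split; [apply Rinv_0_lt_compat; lra|apply Rinv_le_contravar; lra].
Qed.

Section Budget.
Variables (r : nat) (c0 A : R).
Hypothesis r_pos : (1 <= r)%nat.
Hypothesis c0_nonneg : 0 <= c0.
Hypothesis A_ge_1 : 1 <= A.

Local Notation delta := (phase_gain r).
Local Notation F := (phase_budget r c0 A).

Let r_ge_1 : 1 <= INR r.
Proof. apply (le_INR 1). lia. Qed.

Let weight_nonneg : 0 <= 4 * INR r * c0.
Proof. apply Rmult_le_pos; lra. Qed.

Let area_gain : 16 * INR r * INR r * delta = 4 * INR r.
Proof. unfold phase_gain. field. lra. Qed.

Lemma ln_gain_ge al : 1 <= al -> 4 * INR r * c0 * (ln al - ln (al - delta)) >= c0 / al.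
Proof.
  intros Hal. destruct (phase_gain_bounds r r_pos).
  pose proof (ln_sub_ln_ge al (al - delta) ltac:(lra) ltac:(lra)) as L.
  replace ((al - (al - delta)) / al) with (delta / al) in L by (field; lra).
  replace (c0 / al) with (4 * INR r * c0 * (delta / al)) by (unfold phase_gain; field; lra).
  apply Rle_ge, Rmult_le_compat_l; lra.
Qed.

Lemma phase_budget_step al : 1 <= al -> F al >= 4 * INR r + c0 / al + F (al + delta).
Proof.
  intros Hal. pose proof (ln_gain_ge al Hal).
  unfold phase_budget. replace (al + delta - delta) with al by ring. nra.
Qed.

Lemma phase_budget_last al : 1 <= al -> al < A -> F al >= 4 * INR r + c0 / al.
Proof.
  intros Hal HalA. pose proof (ln_gain_ge al Hal). destruct (phase_gain_bounds r r_pos).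
  assert (ln al <= ln A) by (apply Rlt_le, ln_increasing; lra).
  unfold phase_budget. nra.
Qed.

Lemma phase_budget_antitone a b : 1 <= a -> a <= b -> F b <= F a.
Proof.
  intros Ha Hab. destruct (phase_gain_bounds r r_pos).
  assert (ln (a - delta) <= ln (b - delta)).
  { destruct (Req_dec a b) as [->|]; [lra|]. apply Rlt_le, ln_increasing; lra. }
  unfold phase_budget. nra.
Qed.

Lemma phase_budget_nonneg : 0 <= F 1.
Proof.
  destruct (phase_gain_bounds r r_pos).
  assert (ln (1 - delta) < 0) by (rewrite <- ln_1; apply ln_increasing; lra).
  assert (0 <= ln A).
  { rewrite <- ln_1. destruct (Req_dec A 1) as [->|]; [lra|]. apply Rlt_le, ln_increasing; lra. }
  unfold phase_budget. nra.
Qed.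

End Budget.

Lemma phase_frequency r al : (1 <= r)%nat ->
  exists q m, (1 <= q <= 2 * r)%nat /\ Rabs (INR q * al - INR r * IZR m) < / 2.
Proof.
  intros Hr.
  destruct (dirichlet_approximation (al / INR r) (2 * r) ltac:(lia)) as [q [Hq [m Hm]]].
  exists q, m. split; [exact Hq|].
  assert (Hrpos : 0 < INR r) by (apply lt_0_INR; lia).
  replace (INR q * al - INR r * IZR m) with (INR r * (INR q * (al / INR r) - IZR m))
    by (field; lra).
  rewrite Rabs_mult, Rabs_right by lra.
  rewrite mult_INR in Hm. simpl (INR 2) in Hm.
  apply (Rmult_lt_compat_l (INR r)) in Hm; [|lra].
  replace (INR r * / ((1 + 1) * INR r)) with (/ 2) in Hm by (field; lra). exact Hm.
Qed.

Lemma phase_exit_gain r q (m : Z) al dj : (1 <= q <= 2 * r)%nat ->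
  INR q * al - INR r * IZR m < / 2 -> INR q * dj - INR r * IZR m >= 1 ->
  dj >= al + phase_gain r.
Proof.
  intros Hq Hstart Hexit.
  assert (Hq1 : 1 <= INR q) by (apply (le_INR 1); lia).
  assert (Hq2 : INR q <= 2 * INR r).
  { replace 2 with (INR 2) by (simpl; lra). rewrite <- mult_INR. apply le_INR. lia. }
  assert (dj >= al + / (2 * INR q)).
  { apply Rle_ge, (Rmult_le_reg_l (INR q)); [lra|].
    replace (INR q * (al + / (2 * INR q))) with (INR q * al + / 2) by (field; lra). lra. }
  assert (/ (4 * INR r) <= / (2 * INR q)) by (apply Rinv_le_contravar; lra).
  unfold phase_gain. lra.
Qed.

Section Convex_increments.
Variables (phi : nat -> R) (E : nat) (kappa : R).
Hypothesis kappa_pos : 0 < kappa.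
Hypothesis increment_convex : forall i, (i + 1 < E)%nat ->
  increment phi (S i) - increment phi i >= kappa * increment phi i * increment phi i.

Local Notation d := (increment phi).

Lemma increment_mono i j : (i <= j)%nat -> (j < E)%nat -> d i <= d j.
Proof.
  intros Hij HjE. induction j as [|j IH].
  - replace i with 0%nat by lia. lra.
  - destruct (Nat.eq_dec i (S j)) as [->|Hne]; [lra|].
    specialize (IH ltac:(lia) ltac:(lia)). pose proof (increment_convex j ltac:(lia)).
    assert (0 <= kappa * d j * d j)
      by (rewrite Rmult_assoc; apply Rmult_le_pos; [lra|apply Rle_0_sqr]).
    lra.
Qed.

Lemma increment_growth i q al : 0 <= al -> al <= d i -> (i + q < E)%nat ->
  d (i + q)%nat - d i >= INR q * (kappa * al * al).
Proof.
  intros Hal Hdi. induction q as [|q IH]; intros Hq.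
  - rewrite Nat.add_0_r. simpl. lra.
  - specialize (IH ltac:(lia)). pose proof (increment_convex (i + q) ltac:(lia)) as Hc.
    replace (S (i + q)) with (i + S q)%nat in Hc by lia.
    assert (al <= d (i + q)%nat)
      by (pose proof (increment_mono i (i + q) ltac:(lia) ltac:(lia)); lra).
    assert (kappa * al * al <= kappa * d (i + q)%nat * d (i + q)%nat).
    { rewrite !Rmult_assoc. apply Rmult_le_compat_l; [lra|]. apply Rmult_le_compat; lra. }
    rewrite S_INR. lra.
Qed.

End Convex_increments.

Section Convex_walk.
Variables (phi : nat -> R) (E r c : nat) (kappa c0 : R).
Hypothesis r_pos : (1 <= r)%nat.
Hypothesis c_lt_r : (c < r)%nat.
Hypothesis kappa_pos : 0 < kappa.
Hypothesis c0_nonneg : 0 <= c0.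
Hypothesis c0_large : c0 * c0 * kappa >= 8 * INR r.
Hypothesis increment_convex : forall i, (i + 1 < E)%nat ->
  increment phi (S i) - increment phi i >= kappa * increment phi i * increment phi i.
Hypothesis avoids_residue : forall i, (i <= E)%nat -> floor_mod r (phi i) <> Z.of_nat c.

Local Notation d := (increment phi).

Let d_mono := increment_mono phi E kappa kappa_pos increment_convex.
Let d_growth := increment_growth phi E kappa kappa_pos increment_convex.

(* A phase: the increments stay close to the rational r m / q.  Sampling phi
   every q steps and subtracting r m per sample gives a walk with steps in
   (-1/2, 1) which avoids the same residue class, hence is confined to a window
   of width r; its second differences are at least q^2 kappa (d s)^2. *)
Section Phase.
Variables (s P q : nat) (m : Z).
Hypothesis phase_in_range : (s + P <= E)%nat.
Hypothesis q_range : (1 <= q <= 2 * r)%nat.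
Hypothesis phase_start_pos : 0 < d s.
Hypothesis phase_start : INR q * d s - INR r * IZR m > - / 2.
Hypothesis phase_below : forall i, (s <= i < s + P)%nat -> INR q * d i - INR r * IZR m < 1.

Let sample (t : nat) : R := phi (s + t * q)%nat - INR t * (INR r * IZR m).

Lemma sample_step t : ((t + 1) * q <= P)%nat -> - / 2 < sample (S t) - sample t < 1.
Proof.
  intros Ht. unfold sample.
  replace (s + S t * q)%nat with ((s + t * q) + q)%nat by lia.
  assert (Hq : 0 < INR q) by (apply lt_0_INR; lia).
  assert (Hlo : INR q * d s <= phi (s + t * q + q)%nat - phi (s + t * q)%nat).
  { apply sum_increments_ge. intros j Hj. apply d_mono; nia. }
  assert (Hhi : phi (s + t * q + q)%nat - phi (s + t * q)%nat
                < INR q * ((1 + INR r * IZR m) / INR q)).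
  { apply sum_increments_lt; [lia|]. intros j Hj.
    pose proof (phase_below (s + t * q + j)%nat ltac:(nia)).
    apply (Rmult_lt_reg_l (INR q)); [lra|]. field_simplify; lra. }
  replace (INR q * ((1 + INR r * IZR m) / INR q)) with (1 + INR r * IZR m) in Hhi
    by (field; lra).
  rewrite S_INR. split; nra.
Qed.

Lemma sample_second_difference t : ((t + 2) * q <= P)%nat ->
  sample (t + 2)%nat - sample (t + 1)%nat - (sample (t + 1)%nat - sample t)
  >= INR q * INR q * (kappa * d s * d s).
Proof.
  intros Ht. unfold sample. set (al := d s).
  replace (s + (t + 2) * q)%nat with ((s + t * q) + q + q)%nat by lia.
  replace (s + (t + 1) * q)%nat with ((s + t * q) + q)%nat by lia.
  set (a := (s + t * q)%nat).
  assert (Hgrow : forall j, (j <= q)%nat ->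
    (phi (a + q + j)%nat - phi (a + j)%nat) - (phi (a + q)%nat - phi a)
    >= INR j * (INR q * (kappa * al * al))).
  { induction j as [|j IH]; intros Hj.
    - rewrite !Nat.add_0_r. simpl. lra.
    - specialize (IH ltac:(lia)).
      assert (Hds : al <= d (a + j)%nat) by (apply d_mono; unfold a; nia).
      pose proof (d_growth (a + j) q al ltac:(unfold al; lra) Hds ltac:(unfold a; nia)) as G.
      unfold increment in G.
      replace (S (a + j + q)) with (a + q + S j)%nat in G by lia.
      replace (a + j + q)%nat with (a + q + j)%nat in G by lia.
      replace (S (a + j)) with (a + S j)%nat in G by lia.
      rewrite S_INR. lra. }
  specialize (Hgrow q (le_n q)). rewrite !plus_INR. simpl (INR 2). simpl (INR 1). lra.
Qed.

Lemma sample_avoids_residue t : (t * q <= P)%nat -> floor_mod r (sample t) <> Z.of_nat c.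
Proof.
  intros Ht. unfold sample.
  replace (phi (s + t * q)%nat - INR t * (INR r * IZR m))
    with (phi (s + t * q)%nat + IZR (Z.of_nat r * (- Z.of_nat t * m)))
    by (rewrite !mult_IZR, opp_IZR, <- !INR_IZR_INZ; ring).
  rewrite floor_mod_add_mul by lia. apply avoids_residue. lia.
Qed.

Lemma phase_length_le : INR P <= 4 * INR r + c0 / d s.
Proof.
  set (al := d s) in *.
  set (T := (P / q)%nat).
  assert (HT : (T * q <= P < (T + 1) * q)%nat).
  { unfold T. pose proof (Nat.div_mod_eq P q).
    pose proof (Nat.mod_upper_bound P q ltac:(lia)). nia. }
  destruct (walk_confined r c sample T ltac:(lia) c_lt_r) as [z Hz].
  { intros t Ht. apply sample_avoids_residue. nia. }
  { intros t Ht. pose proof (sample_step t ltac:(nia)). apply Rabs_def1; lra. }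
  set (h := (T / 2)%nat).
  assert (Hh : (2 * h <= T <= 2 * h + 1)%nat).
  { unfold h. pose proof (Nat.div_mod_eq T 2).
    pose proof (Nat.mod_upper_bound T 2 ltac:(lia)). lia. }
  pose proof (midpoint_defect_ge sample (INR q * INR q * (kappa * al * al)) T
    (fun t Ht => sample_second_difference t ltac:(nia)) h ltac:(lia)) as Hmid.
  pose proof (Hz 0%nat ltac:(lia)). pose proof (Hz h ltac:(lia)).
  pose proof (Hz (2 * h)%nat ltac:(lia)).
  assert (HP : (P + 1 <= (2 * h + 2) * q)%nat) by nia.
  apply le_INR in HP. rewrite plus_INR, !mult_INR, plus_INR, mult_INR in HP. simpl (INR 1) in HP.
  simpl (INR 2) in HP.
  assert (Hq : 1 <= INR q <= 2 * INR r).
  { split; [apply (le_INR 1); lia|].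
    replace 2 with (INR 2) by (simpl; lra). rewrite <- mult_INR. apply le_INR. lia. }
  (* The midpoint defect is less than twice the width of the window, so
     (2 q h al)^2 kappa < 8 r <= c0^2 kappa. *)
  assert (Hh0 : 0 <= INR h) by apply pos_INR.
  set (x := 2 * INR q * INR h * al).
  assert (Hx0 : 0 <= x) by (unfold x; repeat apply Rmult_le_pos; lra).
  assert (Hxx : x * x * kappa < c0 * c0 * kappa) by (unfold x; nra).
  assert (Hx : x < c0).
  { assert (x * x < c0 * c0) by (apply (Rmult_lt_reg_r kappa); lra). nra. }
  assert (2 * INR q * INR h < c0 / al).
  { apply (Rmult_lt_reg_r al); [lra|]. replace (c0 / al * al) with c0 by (field; lra).
    unfold x in Hx. lra. }
  lra.
Qed.

End Phase.

Section Runs.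
Variable A : R.
Hypothesis A_ge_1 : 1 <= A.

Local Notation F := (phase_budget r c0 A).

Lemma run_length_le_budget n : forall s e, (e <= E)%nat -> (e - s = n)%nat -> (s < e)%nat ->
  (forall i, (s <= i < e)%nat -> 1 <= d i < A) -> INR (e - s) <= F (d s).
Proof.
  induction n as [n IH] using lt_wf_ind. intros s e HeE Hn Hse Hd.
  destruct (Hd s ltac:(lia)) as [Hal HalA].
  destruct (phase_frequency r (d s) r_pos) as [q [m [Hq Hqm]]].
  apply Rabs_def2 in Hqm. destruct Hqm as [Hqm_hi Hqm_lo].
  destruct (first_failure (fun i => INR q * d i - INR r * IZR m < 1) s e ltac:(lia))
    as [Hall|[j [Hj [Hexit Hbefore]]]].
  - pose proof (phase_length_le s (e - s) q m ltac:(lia) Hq ltac:(lra) Hqm_lo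
      (fun i Hi => Hall i ltac:(lia))).
    pose proof (phase_budget_last r c0 A r_pos c0_nonneg (d s) Hal HalA). lra.
  - assert (Hjs : j <> s) by (intros ->; apply Hexit; lra).
    pose proof (phase_length_le s (j - s) q m ltac:(lia) Hq ltac:(lra) Hqm_lo
      (fun i Hi => Hbefore i ltac:(lia))).
    pose proof (phase_exit_gain r q m (d s) (d j) Hq Hqm_hi (Rnot_lt_ge _ _ Hexit)).
    specialize (IH (e - j)%nat ltac:(lia) j e HeE eq_refl ltac:(lia) (fun i Hi => Hd i ltac:(lia))).
    pose proof (phase_budget_step r c0 A r_pos c0_nonneg (d s) Hal).
    destruct (phase_gain_bounds r r_pos).
    pose proof (phase_budget_antitone r c0 A r_pos c0_nonneg (d s + phase_gain r) (d j)
      ltac:(lra) ltac:(lra)).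
    replace (e - s)%nat with ((j - s) + (e - j))%nat by lia. rewrite plus_INR. lra.
Qed.

Lemma run_length_bound s : (s <= E)%nat -> (forall i, (s <= i < E)%nat -> 1 <= d i) ->
  INR (E - s) <= F 1 + (phi E - phi s) / A.
Proof.
  intros HsE Hd.
  pose proof (phase_budget_nonneg r c0 A r_pos c0_nonneg A_ge_1).
  assert (Hrise : forall a b, (s <= a <= b)%nat -> (b <= E)%nat -> INR (b - a) <= phi b - phi a).
  { intros a b Hab HbE.
    pose proof (sum_increments_ge phi a (b - a) 1 (fun j Hj => Hd (a + j)%nat ltac:(lia))) as Hsum.
    replace (a + (b - a))%nat with b in Hsum by lia. lra. }
  assert (Hslow : forall j, (s <= j <= E)%nat -> (forall i, (s <= i < j)%nat -> d i < A) ->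
    INR (j - s) <= F 1).
  { intros j Hj Hbelow. destruct (Nat.eq_dec s j) as [->|Hne].
    - rewrite Nat.sub_diag. simpl. lra.
    - pose proof (run_length_le_budget (j - s) s j ltac:(lia) eq_refl ltac:(lia)
        (fun i Hi => conj (Hd i ltac:(lia)) (Hbelow i Hi))).
      pose proof (phase_budget_antitone r c0 A r_pos c0_nonneg 1 (d s) ltac:(lra)
        (Hd s ltac:(lia))). lra. }
  assert (Hfast : forall j, (s <= j <= E)%nat -> A <= d j -> INR (E - j) <= (phi E - phi s) / A).
  { intros j Hj Hdj.
    pose proof (sum_increments_ge phi j (E - j) A
      (fun t Ht => Rle_trans _ _ _ Hdj (d_mono j (j + t) ltac:(lia) ltac:(lia)))) as Hsum.
    replace (j + (E - j))%nat with E in Hsum by lia.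
    pose proof (Hrise s j ltac:(lia) ltac:(lia)). pose proof (pos_INR (j - s)).
    apply (Rmult_le_reg_r A); [lra|]. unfold Rdiv. rewrite Rmult_assoc, Rinv_l by lra. lra. }
  destruct (first_failure (fun i => d i < A) s E HsE) as [Hall|[j [Hj [Hbig Hbefore]]]].
  - pose proof (Hslow E ltac:(lia) Hall).
    pose proof (Hrise s E ltac:(lia) (le_n E)). pose proof (pos_INR (E - s)).
    assert (0 <= (phi E - phi s) / A)
      by (unfold Rdiv; apply Rmult_le_pos; [lra|left; apply Rinv_0_lt_compat; lra]).
    lra.
  - pose proof (Hslow j ltac:(lia) Hbefore). pose proof (Hfast j ltac:(lia) (Rnot_lt_le _ _ Hbig)).
    replace (E - s)%nat with ((j - s) + (E - j))%nat by lia. rewrite plus_INR. lra.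
Qed.

End Runs.
End Convex_walk.

(** * The cell coloring *)

Section Cells.
Open Scope nat_scope.

Definition wave_free (r k N : nat) (col : nat -> nat) : Prop :=
  (forall x, 1 <= x <= N -> col x < r) /\
  forall n w, ascending_wave n w -> (forall i, i < n -> w i <= N) ->
    (forall i, i < n -> col (w i) = col (w 0)) -> n < k.

Lemma ascending_wave_ge_index n w : ascending_wave n w -> forall i, i < n -> i + 1 <= w i.
Proof.
  intros [Hpos [Hinc _]]. induction i as [|i IH]; intros Hi.
  - specialize (Hpos 0 Hi). lia.
  - specialize (IH ltac:(lia)). specialize (Hinc i ltac:(lia)).
    replace (i + 1) with (S i) in Hinc by lia. lia.
Qed.

Lemma ascending_wave_le n w : ascending_wave n w -> forall i j, i <= j -> j < n -> w i <= w j.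
Proof.
  intros [_ [Hinc _]] i j Hij Hj. induction j as [|j IH].
  - replace i with 0 by lia. lia.
  - destruct (Nat.eq_dec i (S j)) as [->|]; [lia|].
    specialize (IH ltac:(lia) ltac:(lia)). specialize (Hinc j ltac:(lia)).
    replace (j + 1) with (S j) in Hinc by lia. lia.
Qed.

Lemma wave_free_one_color k : 1 <= k -> wave_free 1 k (k - 1) (fun _ => 0).
Proof.
  intros Hk. split; [intros; lia|].
  intros n w Hw Hle _. destruct n as [|n]; [lia|].
  pose proof (ascending_wave_ge_index (S n) w Hw n ltac:(lia)).
  specialize (Hle n ltac:(lia)). lia.
Qed.

Lemma wave_free_pos r k N col : wave_free r k N col -> 1 <= k.
Proof.
  intros [_ Hfree]. apply (Hfree 0 (fun _ => 1)); [repeat split; intros; lia|lia|lia].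
Qed.

(* [cell_start b x] walks down from [x] while [b] is constant: for monotone [b]
   it is the first point of the level set (the cell) of [b] containing [x]. *)
Fixpoint cell_start (b : nat -> nat) (x : nat) : nat :=
  match x with
  | 0 => 0
  | S y => if Nat.eqb (b (S y)) (b y) then cell_start b y else S y
  end.

Lemma cell_start_le b x : cell_start b x <= x.
Proof. induction x as [|x IH]; simpl; [lia|]. destruct (Nat.eqb _ _); lia. Qed.

Lemma cell_start_constant b x y : cell_start b x <= y <= x -> b y = b x.
Proof.
  revert y. induction x as [|x IH]; intros y Hy; simpl in Hy.
  - replace y with 0 by lia. reflexivity.
  - destruct (Nat.eqb_spec (b (S x)) (b x)) as [E|E].
    + destruct (Nat.eq_dec y (S x)) as [->|Hne]; [reflexivity|].
      rewrite E. apply IH. lia.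
    + replace y with (S x) by lia. reflexivity.
Qed.

Lemma cell_start_eq b : (forall x y, x <= y -> b x <= b y) ->
  forall x1 x2, x1 <= x2 -> b x1 = b x2 -> cell_start b x1 = cell_start b x2.
Proof.
  intros Hmono x1 x2. induction x2 as [|x2 IH]; intros H12 Hb.
  - replace x1 with 0 by lia. reflexivity.
  - destruct (Nat.eq_dec x1 (S x2)) as [->|Hne]; [reflexivity|].
    assert (Hstep : b x2 = b (S x2)).
    { pose proof (Hmono x1 x2 ltac:(lia)). pose proof (Hmono x2 (S x2) ltac:(lia)). lia. }
    simpl. rewrite Hstep, Nat.eqb_refl. apply IH; lia.
Qed.

Definition skip_color (e y : nat) : nat := if y <? e then y else S y.

Lemma skip_color_neq e y : skip_color e y <> e.
Proof. unfold skip_color. destruct (Nat.ltb_spec y e); lia. Qed.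

Lemma skip_color_inj e y1 y2 : skip_color e y1 = skip_color e y2 -> y1 = y2.
Proof.
  unfold skip_color. destruct (Nat.ltb_spec y1 e), (Nat.ltb_spec y2 e); lia.
Qed.

Lemma skip_color_lt e y r : y < r - 1 -> 1 <= r -> skip_color e y < r.
Proof. unfold skip_color. destruct (Nat.ltb_spec y e); lia. Qed.

(* Inside each cell of [b] the coloring copies [col'] (with r - 1 colors), and
   the color [b x mod r] is skipped so that a monochromatic wave never visits a
   cell whose index has its residue. *)
Variables (b : nat -> nat) (r M k' : nat) (col' : nat -> nat).
Hypothesis b_mono : forall x y, x <= y -> b x <= b y.
Hypothesis cell_short : forall x, x - cell_start b x < M.
Hypothesis col'_free : wave_free (r - 1) k' M col'.

Definition cell_coloring (x : nat) : nat :=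
  skip_color (b x mod r) (col' (x - cell_start b x + 1)).

Lemma cell_coloring_lt x : 1 <= r -> cell_coloring x < r.
Proof.
  intros Hr. apply skip_color_lt; [|exact Hr].
  apply (proj1 col'_free). pose proof (cell_short x). lia.
Qed.

Lemma cell_coloring_neq x : cell_coloring x <> b x mod r.
Proof. apply skip_color_neq. Qed.

Lemma wave_in_one_cell n w s e : ascending_wave n w -> e < n -> s <= e ->
  (forall i, s <= i <= e -> b (w i) = b (w s)) ->
  (forall i, s <= i <= e -> cell_coloring (w i) = cell_coloring (w s)) -> e - s + 1 < k'.
Proof.
  intros Hw Hen Hse Hb Hc.
  set (st := cell_start b (w s)).
  assert (Hst : forall i, s <= i <= e -> cell_start b (w i) = st).
  { intros i Hi. symmetry. apply cell_start_eq; [exact b_mono| |].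
    - apply (ascending_wave_le n w Hw); lia.
    - symmetry. apply Hb. exact Hi. }
  assert (Hge : forall i, s <= i <= e -> st <= w i).
  { intros i Hi. rewrite <- (Hst i Hi). apply cell_start_le. }
  apply ((proj2 col'_free) (e - s + 1) (fun t => w (s + t) - st + 1)).
  - destruct Hw as [Hpos [Hinc Hcv]]. split; [|split].
    + intros i Hi. lia.
    + intros i Hi. specialize (Hinc (s + i) ltac:(lia)).
      pose proof (Hge (s + i) ltac:(lia)). replace (s + (i + 1)) with (s + i + 1) by lia. lia.
    + intros i Hi1 Hi2. specialize (Hcv (s + i) ltac:(lia) ltac:(lia)).
      pose proof (Hge (s + i) ltac:(lia)). pose proof (Hge (s + i + 1) ltac:(lia)).
      pose proof (Hge (s + i - 1) ltac:(lia)).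
      replace (s + (i + 1)) with (s + i + 1) by lia.
      replace (s + (i - 1)) with (s + i - 1) by lia. lia.
  - intros i Hi. pose proof (cell_short (w (s + i))) as Hshort.
    rewrite (Hst (s + i) ltac:(lia)) in Hshort. lia.
  - intros i Hi. pose proof (Hc (s + i) ltac:(lia)) as Hci.
    unfold cell_coloring in Hci. rewrite (Hst (s + i) ltac:(lia)), (Hb (s + i) ltac:(lia)) in Hci.
    fold st in Hci. apply skip_color_inj in Hci. rewrite Hci, Nat.add_0_r. reflexivity.
Qed.

Lemma wave_in_cells a n w s e : ascending_wave n w -> e < n -> s <= e ->
  (forall i, s <= i <= e -> cell_coloring (w i) = cell_coloring (w s)) ->
  (forall i, s <= i <= e -> b (w i) < b (w s) + a) -> e - s + 1 <= a * (k' - 1).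
Proof.
  revert s. induction a as [|a IH]; intros s Hw Hen Hse Hc Hb.
  - specialize (Hb s ltac:(lia)). lia.
  - destruct (first_failure (fun i => b (w i) = b (w s)) s (e + 1) ltac:(lia))
      as [Hall|[j [Hj [Hnext Hbefore]]]].
    + pose proof (wave_in_one_cell n w s e Hw Hen Hse (fun i Hi => Hall i ltac:(lia)) Hc). nia.
    + assert (Hjs : j <> s) by (intros ->; apply Hnext; reflexivity).
      pose proof (wave_in_one_cell n w s (j - 1) Hw ltac:(lia) ltac:(lia)
        (fun i Hi => Hbefore i ltac:(lia)) (fun i Hi => Hc i ltac:(lia))).
      assert (b (w s) < b (w j)).
      { pose proof (b_mono (w s) (w j) (ascending_wave_le n w Hw s j ltac:(lia) ltac:(lia))). lia. }
      assert (e - j + 1 <= a * (k' - 1)).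
      { apply IH; auto; try lia.
        - intros i Hi. rewrite (Hc i ltac:(lia)), (Hc j ltac:(lia)). reflexivity.
        - intros i Hi. specialize (Hb i ltac:(lia)). lia. }
      nia.
Qed.

End Cells.

Definition quadratic_cell (M N x : nat) : nat := ((2 * N * x + x * x) / (2 * N * M))%nat.

Definition cell_height (M N x : nat) : R :=
  (2 * INR N * INR x + INR x * INR x) / (2 * INR N * INR M).

Section Quadratic_cells.
Variables (M N : nat).
Hypothesis M_pos : (1 <= M)%nat.
Hypothesis N_pos : (1 <= N)%nat.

Lemma quadratic_cell_mono x y : (x <= y)%nat -> (quadratic_cell M N x <= quadratic_cell M N y)%nat.
Proof. intros H. unfold quadratic_cell. apply Nat.Div0.div_le_mono; nia. Qed.

(* Within a cell the numerator grows by at least 2 N per step and by less than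
   the denominator 2 N M in total. *)
Lemma quadratic_cell_short x : (x - cell_start (quadratic_cell M N) x < M)%nat.
Proof.
  set (s := cell_start (quadratic_cell M N) x).
  assert (Hs : (s <= x)%nat) by apply cell_start_le.
  assert (Hb : quadratic_cell M N s = quadratic_cell M N x) by (apply cell_start_constant; lia).
  unfold quadratic_cell in Hb.
  pose proof (Nat.div_mod_eq (2 * N * s + s * s) (2 * N * M)).
  pose proof (Nat.div_mod_eq (2 * N * x + x * x) (2 * N * M)).
  pose proof (Nat.mod_upper_bound (2 * N * s + s * s) (2 * N * M) ltac:(nia)).
  pose proof (Nat.mod_upper_bound (2 * N * x + x * x) (2 * N * M) ltac:(nia)).
  nia.
Qed.

Lemma Int_part_cell_height x : Int_part (cell_height M N x) = Z.of_nat (quadratic_cell M N x).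
Proof.
  assert (0 < INR N) by (apply lt_0_INR; lia). assert (0 < INR M) by (apply lt_0_INR; lia).
  replace (cell_height M N x) with (INR (2 * N * x + x * x) / INR (2 * N * M))
    by (unfold cell_height; rewrite plus_INR, !mult_INR; simpl; field; nra).
  apply Int_part_INR_div. nia.
Qed.

Lemma cell_height_nonneg x : 0 <= cell_height M N x.
Proof.
  assert (0 < INR N) by (apply lt_0_INR; lia). assert (0 < INR M) by (apply lt_0_INR; lia).
  pose proof (pos_INR x). unfold cell_height.
  apply Rmult_le_pos; [|left; apply Rinv_0_lt_compat]; nra.
Qed.

Lemma cell_height_le x : (x <= N)%nat -> cell_height M N x <= 3 * INR N / (2 * INR M).
Proof.
  intros Hx. apply le_INR in Hx. pose proof (pos_INR x).
  assert (0 < INR N) by (apply lt_0_INR; lia). assert (0 < INR M) by (apply lt_0_INR; lia).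
  unfold cell_height. apply (Rmult_le_reg_r (2 * INR N * INR M)); [nra|].
  replace (3 * INR N / (2 * INR M) * (2 * INR N * INR M)) with (3 * INR N * INR N) by (field; lra).
  unfold Rdiv. rewrite Rmult_assoc, Rinv_l, Rmult_1_r by nra. nra.
Qed.

End Quadratic_cells.

Lemma quadratic_second_difference T U X Y Z : 0 < T -> 0 < U -> 0 <= X -> X < Y -> Y < Z ->
  Y - X <= Z - Y -> X + Y <= T ->
  let f v := (T * v + v * v) / U in
  f Z - f Y - (f Y - f X) >= U / (2 * T * T) * ((f Y - f X) * (f Y - f X)).
Proof.
  intros HT HU HX HXY HYZ Hwave HXYT f. unfold f.
  set (D1 := Y - X). set (D2 := Z - Y).
  replace ((T * Z + Z * Z) / U - (T * Y + Y * Y) / U - ((T * Y + Y * Y) / U - (T * X + X * X) / U))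
    with ((T * (D2 - D1) + D2 * (Z + Y) - D1 * (Y + X)) / U) by (unfold D1, D2; field; lra).
  replace ((T * Y + Y * Y) / U - (T * X + X * X) / U) with (D1 * (T + X + Y) / U)
    by (unfold D1; field; lra).
  assert (Hsecond : 2 * D1 * D1 <= T * (D2 - D1) + D2 * (Z + Y) - D1 * (Y + X))
    by (unfold D1, D2 in *; nra).
  assert (Hfirst : 0 <= D1 * (T + X + Y) / U <= 2 * T * D1 / U).
  { unfold D1 in *. split.
    - apply Rmult_le_pos; [nra|left; apply Rinv_0_lt_compat; lra].
    - unfold Rdiv. apply Rmult_le_compat_r; [left; apply Rinv_0_lt_compat; lra|nra]. }
  set (a := D1 * (T + X + Y) / U) in *.
  assert (Hsq : U / (2 * T * T) * (a * a)
               <= U / (2 * T * T) * ((2 * T * D1 / U) * (2 * T * D1 / U))).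
  { apply Rmult_le_compat_l; [|apply Rmult_le_compat; lra].
    unfold Rdiv. apply Rmult_le_pos; [lra|]. left. apply Rinv_0_lt_compat. nra. }
  replace (U / (2 * T * T) * ((2 * T * D1 / U) * (2 * T * D1 / U))) with (2 * D1 * D1 / U) in Hsq
    by (field; lra).
  apply Rle_ge. eapply Rle_trans; [exact Hsq|].
  unfold Rdiv. apply Rmult_le_compat_r; [left; apply Rinv_0_lt_compat; lra|lra].
Qed.

Lemma slow_walk_below_residue (r c p : nat) (v : nat -> nat) : (c < r)%nat ->
  (forall i, (i < p)%nat -> (v (S i) <= v i + 1)%nat) ->
  (forall i, (i <= p)%nat -> v i mod r <> c) ->
  exists a, (a <= r - 1)%nat /\ forall i, (i <= p)%nat -> (v i < v 0%nat + a)%nat.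
Proof.
  intros Hc Hstep Havoid.
  set (m0 := v 0%nat mod r).
  assert (Hm0 : (m0 < r)%nat) by (apply Nat.mod_upper_bound; lia).
  assert (Hm0c : m0 <> c) by (apply Havoid; lia).
  set (a := if m0 <=? c then (c - m0)%nat else (c + r - m0)%nat).
  assert (Ha : (1 <= a <= r - 1)%nat) by (unfold a; destruct (Nat.leb_spec m0 c); lia).
  assert (Hac : ((v 0%nat + a) mod r = c)%nat).
  { pose proof (Nat.div_mod_eq (v 0%nat) r). unfold a. destruct (Nat.leb_spec m0 c).
    - symmetry. apply (Nat.mod_unique _ _ (v 0%nat / r)); lia.
    - symmetry. apply (Nat.mod_unique _ _ (v 0%nat / r + 1)); lia. }
  exists a. split; [lia|].
  induction i as [|i IH]; intros Hi; [lia|].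
  specialize (IH ltac:(lia)). specialize (Hstep i ltac:(lia)).
  destruct (Nat.eq_dec (v (S i)) (v 0%nat + a)) as [Heq|Hne]; [|lia].
  exfalso. apply (Havoid (S i) Hi). rewrite Heq. exact Hac.
Qed.

Lemma neg_ln_one_sub_phase_gain_le r : (1 <= r)%nat -> - ln (1 - phase_gain r) <= / 3.
Proof.
  intros Hr. destruct (phase_gain_bounds r Hr) as [Hpos Hle].
  rewrite <- ln_Rinv by lra.
  assert (Hinv : 0 < / (1 - phase_gain r)) by (apply Rinv_0_lt_compat; lra).
  pose proof (ln_le_sub1 _ Hinv).
  assert (/ (1 - phase_gain r) <= 4 / 3).
  { replace (4 / 3) with (/ (3 / 4)) by field. apply Rinv_le_contravar; lra. }
  lra.
Qed.

Lemma phase_budget_one_le r lam : (1 <= r)%nat -> 1 <= lam ->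
  phase_budget r (4 * INR r * lam) lam 1 + 3 * lam / 4
  <= 23 * INR r * INR r * lam * (1 + ln lam).
Proof.
  intros Hr Hlam. unfold phase_budget.
  pose proof (neg_ln_one_sub_phase_gain_le r Hr). destruct (phase_gain_bounds r Hr).
  assert (1 <= INR r) by (apply (le_INR 1); lia).
  assert (0 <= ln lam).
  { rewrite <- ln_1. destruct (Req_dec lam 1) as [->|]; [lra|]. left. apply ln_increasing; lra. }
  assert (Hlam_r : lam <= INR r * INR r * lam)
    by (rewrite <- (Rmult_1_l lam) at 1; apply Rmult_le_compat_r; nra).
  assert (0 <= INR r * INR r * lam * ln lam) by (apply Rmult_le_pos; nra).
  nra.
Qed.

Section Inductive_step.
Variables (r M N k' k lam : nat) (col' : nat -> nat).
Hypothesis r_ge_2 : (2 <= r)%nat.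
Hypothesis M_pos : (1 <= M)%nat.
Hypothesis N_pos : (1 <= N)%nat.
Hypothesis lam_pos : (1 <= lam)%nat.
Hypothesis N_small : (2 * N <= lam * lam * M)%nat.
Hypothesis k_large : (2 * r * k' <= k)%nat.
Hypothesis col'_free : wave_free (r - 1) k' M col'.
Hypothesis lam_small : 23 * INR r * INR r * INR lam * (1 + ln (INR lam)) <= INR k / 2.

Local Notation b := (quadratic_cell M N).
Local Notation col := (cell_coloring b r col').

Let b_mono := quadratic_cell_mono M N M_pos N_pos.
Let b_short := quadratic_cell_short M N M_pos N_pos.

Let lam_square_ge : 2 * INR N <= INR lam * INR lam * INR M.
Proof. replace 2 with (INR 2) by (simpl; lra). rewrite <- !mult_INR. apply le_INR. lia. Qed.

Let kappa : R := INR M / (4 * INR N).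

Let kappa_pos : 0 < kappa.
Proof.
  unfold kappa. apply Rdiv_lt_0_compat; [|apply Rmult_lt_0_compat; [lra|]]; apply lt_0_INR; lia.
Qed.

Let phase_weight_large : 4 * INR r * INR lam * (4 * INR r * INR lam) * kappa >= 8 * INR r.
Proof.
  assert (Hr : 2 <= INR r) by (apply (le_INR 2); lia).
  assert (HN : 1 <= INR N) by (apply (le_INR 1); lia).
  unfold kappa. apply Rle_ge. apply (Rmult_le_reg_r (INR N)); [lra|].
  replace (4 * INR r * INR lam * (4 * INR r * INR lam) * (INR M / (4 * INR N)) * INR N)
    with (4 * INR r * INR r * (INR lam * INR lam * INR M)) by (field; lra).
  assert (INR r * INR r * (2 * INR N) <= INR r * INR r * (INR lam * INR lam * INR M))
    by (apply Rmult_le_compat_l; nra).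
  assert (0 <= INR r * INR N * (INR r - 1)) by (apply Rmult_le_pos; nra).
  lra.
Qed.

Section Wave.
Variables (n : nat) (w : nat -> nat).
Hypothesis w_wave : ascending_wave n w.
Hypothesis w_bounded : forall i, (i < n)%nat -> (w i <= N)%nat.
Hypothesis w_monochromatic : forall i, (i < n)%nat -> col (w i) = col (w 0%nat).
Hypothesis n_pos : (1 <= n)%nat.

Let E := (n - 1)%nat.
Let phi (i : nat) : R := cell_height M N (w i).

Lemma wave_increment_convex i : (i + 1 < E)%nat ->
  increment phi (S i) - increment phi i >= kappa * increment phi i * increment phi i.
Proof.
  intros Hi. unfold E in Hi. destruct w_wave as [_ [Hinc Hcv]].
  pose proof (Hinc i ltac:(lia)) as H1. pose proof (Hinc (S i) ltac:(lia)) as H2.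
  pose proof (Hcv (S i) ltac:(lia) ltac:(lia)) as H3.
  replace (S i + 1)%nat with (S (S i)) in H2, H3 by lia.
  replace (i + 1)%nat with (S i) in H1 by lia. replace (S i - 1)%nat with i in H3 by lia.
  pose proof (w_bounded i ltac:(lia)). pose proof (w_bounded (S i) ltac:(lia)).
  assert (0 < INR N) by (apply lt_0_INR; lia). assert (0 < INR M) by (apply lt_0_INR; lia).
  pose proof (quadratic_second_difference (2 * INR N) (2 * INR N * INR M)
    (INR (w i)) (INR (w (S i))) (INR (w (S (S i)))) ltac:(lra) ltac:(nra) (pos_INR _)
    ltac:(apply lt_INR; lia) ltac:(apply lt_INR; lia)
    ltac:(rewrite <- !minus_INR by lia; apply le_INR; lia)
    ltac:(rewrite <- plus_INR;
          replace (2 * INR N) with (INR (2 * N)) by (rewrite mult_INR; reflexivity);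
          apply le_INR; lia)) as Hq.
  cbv zeta in Hq. unfold increment, phi, cell_height, kappa.
  replace (INR M / (4 * INR N)) with (2 * INR N * INR M / (2 * (2 * INR N) * (2 * INR N)))
    by (field; lra).
  lra.
Qed.

Lemma wave_avoids_residue i : (i < n)%nat -> floor_mod r (phi i) <> Z.of_nat (col (w 0%nat)).
Proof.
  intros Hi Hres. unfold floor_mod, phi in Hres.
  rewrite Int_part_cell_height, <- Nat2Z.inj_mod in Hres by lia. apply Nat2Z.inj in Hres.
  apply (cell_coloring_neq b r col' (w i)). rewrite w_monochromatic, Hres by exact Hi. reflexivity.
Qed.

Lemma wave_slow_part p : (p <= E)%nat -> (forall i, (i < p)%nat -> increment phi i < 1) ->
  (p + 1 <= (r - 1) * (k' - 1))%nat.
Proof.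
  intros HpE Hslow. unfold E in HpE.
  destruct (slow_walk_below_residue r (col (w 0%nat)) p (fun i => b (w i))
    ltac:(apply (cell_coloring_lt b r M k'); auto; lia)) as [a [Ha Hbelow]].
  - intros i Hi. specialize (Hslow i Hi). unfold increment, phi in Hslow.
    pose proof (Int_part_le_succ (cell_height M N (w i)) (cell_height M N (w (S i))) ltac:(lra))
      as Hcell.
    rewrite !Int_part_cell_height in Hcell by lia. lia.
  - intros i Hi Hres. apply (wave_avoids_residue i ltac:(lia)). unfold floor_mod, phi.
    rewrite Int_part_cell_height, <- Nat2Z.inj_mod, Hres by lia. reflexivity.
  - pose proof (wave_in_cells b r M k' col' b_mono b_short col'_free a n w 0 p w_wave
      ltac:(lia) ltac:(lia) (fun i Hi => w_monochromatic i ltac:(lia))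
      (fun i Hi => Hbelow i ltac:(lia))). nia.
Qed.

Lemma wave_fast_part p : (p <= E)%nat -> (forall i, (p <= i < E)%nat -> 1 <= increment phi i) ->
  INR (E - p) <= 23 * INR r * INR r * INR lam * (1 + ln (INR lam)).
Proof.
  intros HpE Hfast.
  assert (Hlam : 1 <= INR lam) by (apply (le_INR 1); lia).
  pose proof (run_length_bound phi E r (col (w 0%nat)) kappa (4 * INR r * INR lam) ltac:(lia)
    ltac:(apply (cell_coloring_lt b r M k'); auto; lia) kappa_pos
    ltac:(apply Rmult_le_pos; [|lra]; apply Rmult_le_pos; [lra|apply pos_INR])
    phase_weight_large wave_increment_convex
    (fun i Hi => wave_avoids_residue i ltac:(unfold E in Hi; lia))
    (INR lam) Hlam p HpE Hfast) as Hrun.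
  pose proof (phase_budget_one_le r (INR lam) ltac:(lia) Hlam) as Hbudget.
  assert ((phi E - phi p) / INR lam <= 3 * INR lam / 4).
  { assert (HM : 1 <= INR M) by (apply (le_INR 1); lia).
    pose proof (cell_height_nonneg M N M_pos N_pos (w p)).
    pose proof (cell_height_le M N M_pos N_pos (w E) ltac:(apply w_bounded; unfold E; lia)).
    assert (3 * INR N / (2 * INR M) <= 3 * INR lam / 4 * INR lam).
    { apply (Rmult_le_reg_r (2 * INR M)); [lra|].
      replace (3 * INR N / (2 * INR M) * (2 * INR M)) with (3 * INR N) by (field; lra). nra. }
    apply (Rmult_le_reg_r (INR lam)); [lra|].
    replace ((phi E - phi p) / INR lam * INR lam) with (phi E - phi p) by (field; lra).
    unfold phi. lra. }
  lra.
Qed.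

Lemma wave_short : (n < k)%nat.
Proof.
  destruct (first_failure (fun i => increment phi i < 1) 0 E ltac:(lia))
    as [Hall|[p [Hp [Hfast Hbefore]]]].
  - pose proof (wave_slow_part E (le_n E) (fun i Hi => Hall i ltac:(lia))).
    pose proof (wave_free_pos _ _ _ _ col'_free). unfold E in *. nia.
  - apply Rnot_lt_le in Hfast.
    pose proof (wave_slow_part p ltac:(lia) (fun i Hi => Hbefore i ltac:(lia))) as Hslow.
    pose proof (wave_fast_part p ltac:(lia)
      (fun i Hi => Rle_trans _ _ _ Hfast (increment_mono phi E kappa
         kappa_pos wave_increment_convex
         p i ltac:(lia) ltac:(lia)))) as Hfast_len.
    pose proof (wave_free_pos _ _ _ _ col'_free).
    assert (Hk : (2 * ((r - 1) * (k' - 1)) < k)%nat) by nia.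
    apply le_INR in Hslow. apply lt_INR in Hk. rewrite mult_INR in Hk. simpl (INR 2) in Hk.
    apply INR_lt. replace n with ((p + 1) + (E - p))%nat by (unfold E in *; lia).
    rewrite plus_INR. lra.
Qed.

End Wave.

Theorem wave_free_step : wave_free r k N (cell_coloring (quadratic_cell M N) r col').
Proof.
  split.
  - intros x _. apply (cell_coloring_lt b r M k'); auto. lia.
  - intros n w Hw Hbounded Hmono.
    destruct (Nat.eq_dec n 0) as [->|Hn]; [pose proof (wave_free_pos _ _ _ _ col'_free); lia|].
    apply (wave_short n w Hw Hbounded Hmono). lia.
Qed.

End Inductive_step.

(** * Logarithmic factors *)

Definition log_factor (k : nat) : R := INR (Nat.log2 k + 2).

Lemma log_factor_ge_1 k : 1 <= log_factor k.
Proof. unfold log_factor. apply (le_INR 1). lia. Qed.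

Lemma log_factor_mono a b : (a <= b)%nat -> log_factor a <= log_factor b.
Proof. intros H. unfold log_factor. apply le_INR. pose proof (Nat.log2_le_mono a b H). lia. Qed.

Lemma log2_le_2ln k : (1 <= k)%nat -> INR (Nat.log2 k) <= 2 * ln (INR k).
Proof.
  intros Hk. destruct (Nat.log2_spec k ltac:(lia)) as [Hlo _].
  apply le_INR in Hlo. rewrite pow_INR in Hlo. replace (INR 2) with 2 in Hlo by (simpl; lra).
  assert (Hln : ln (2 ^ Nat.log2 k) <= ln (INR k)).
  { destruct (Rle_lt_or_eq_dec _ _ Hlo) as [Hlt|Heq]; [|rewrite Heq; lra].
    left. apply ln_increasing; [apply pow_lt; lra|exact Hlt]. }
  rewrite ln_pow in Hln by lra. pose proof ln_lt_2. pose proof (pos_INR (Nat.log2 k)).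
  assert (0 <= INR (Nat.log2 k) * (ln 2 - / 2)) by (apply Rmult_le_pos; lra). lra.
Qed.

Lemma ln_le_log2_succ k : (1 <= k)%nat -> ln (INR k) <= INR (Nat.log2 k) + 1.
Proof.
  intros Hk. destruct (Nat.log2_spec k ltac:(lia)) as [_ Hhi].
  apply lt_INR in Hhi. rewrite pow_INR in Hhi. replace (INR 2) with 2 in Hhi by (simpl; lra).
  assert (1 <= INR k) by (apply (le_INR 1); lia).
  assert (Hln : ln (INR k) < ln (2 ^ S (Nat.log2 k))) by (apply ln_increasing; lra).
  rewrite ln_pow, S_INR in Hln by lra.
  pose proof (ln_le_sub1 2 ltac:(lra)). assert (0 < ln 2) by (pose proof ln_lt_2; lra).
  pose proof (pos_INR (Nat.log2 k)). nra.
Qed.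

Lemma Rpower_pos x y : 0 < Rpower x y.
Proof. apply exp_pos. Qed.

Lemma Rpower_ge_1 x y : 1 <= x -> 0 <= y -> 1 <= Rpower x y.
Proof. intros Hx Hy. rewrite <- (Rpower_O x) by lra. apply Rle_Rpower; lra. Qed.

Lemma log_factor_le_Rpower k dl : (1 <= k)%nat -> 0 < dl ->
  log_factor k <= (2 + 2 / dl) * Rpower (INR k) dl.
Proof.
  intros Hk Hdl. pose proof (log2_le_2ln k Hk).
  assert (Hx : 0 < INR k) by (apply lt_0_INR; lia).
  assert (Hln : ln (INR k) <= Rpower (INR k) dl / dl).
  { apply (Rmult_le_reg_l dl); [lra|].
    replace (dl * (Rpower (INR k) dl / dl)) with (Rpower (INR k) dl) by (field; lra).
    rewrite <- ln_Rpower. pose proof (ln_le_sub1 _ (Rpower_pos (INR k) dl)). lra. }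
  assert (1 <= Rpower (INR k) dl) by (apply Rpower_ge_1; [apply (le_INR 1); lia|lra]).
  unfold log_factor. rewrite plus_INR. simpl (INR 2).
  replace ((2 + 2 / dl) * Rpower (INR k) dl)
    with (2 * Rpower (INR k) dl + 2 * (Rpower (INR k) dl / dl)) by (field; lra).
  lra.
Qed.

Lemma Rpower_eventually_ge X eps : 0 < eps ->
  exists K : nat, forall k, (K <= k)%nat -> X <= Rpower (INR k) eps.
Proof.
  intros Heps.
  set (Y := Rmax 1 X).
  assert (HY : 1 <= Y /\ X <= Y) by (split; [apply Rmax_l|apply Rmax_r]).
  destruct (INR_unbounded (Rpower Y (/ eps))) as [K HK].
  exists K. intros k Hk. apply le_INR in Hk.
  replace Y with (Rpower (Rpower Y (/ eps)) eps) in HY.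
  - assert (Rpower (Rpower Y (/ eps)) eps <= Rpower (INR k) eps)
      by (apply Rle_Rpower_l; [lra|split; [apply Rpower_pos|lra]]).
    lra.
  - rewrite Rpower_mult, Rinv_l, Rpower_1 by lra. reflexivity.
Qed.

Lemma polylog_le_Rpower (a : nat) (C eps : R) : 0 < eps ->
  exists K : nat, forall k, (K <= k)%nat -> C * log_factor k ^ a <= Rpower (INR k) eps.
Proof.
  intros Heps.
  set (dl := eps / (2 * (INR a + 1))).
  assert (Ha : 0 <= INR a) by apply pos_INR.
  assert (Hdl : 0 < dl) by (unfold dl; apply Rdiv_lt_0_compat; lra).
  assert (Hadl : INR a * dl <= eps / 2).
  { unfold dl. apply (Rmult_le_reg_r (2 * (INR a + 1))); [lra|].
    replace (INR a * (eps / (2 * (INR a + 1))) * (2 * (INR a + 1))) with (INR a * eps)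
      by (field; lra). nra. }
  set (B := 2 + 2 / dl).
  assert (HB : 0 < B) by (unfold B; assert (0 < 2 / dl) by (apply Rdiv_lt_0_compat; lra); lra).
  destruct (Rpower_eventually_ge (Rmax 0 (C * B ^ a)) (eps / 2) ltac:(lra)) as [K HK].
  exists (S K). intros k Hk. specialize (HK k ltac:(lia)).
  assert (Hk1 : 1 <= INR k) by (apply (le_INR 1); lia).
  assert (Hlog : log_factor k ^ a <= B ^ a * Rpower (INR k) (INR a * dl)).
  { replace (Rpower (INR k) (INR a * dl)) with (Rpower (INR k) dl ^ a)
      by (rewrite <- Rpower_pow, Rpower_mult, Rmult_comm by apply Rpower_pos; reflexivity).
    rewrite <- Rpow_mult_distr. apply pow_incr.
    split; [pose proof (log_factor_ge_1 k); lra|apply log_factor_le_Rpower; [lia|lra]]. }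
  assert (Hsmall : Rpower (INR k) (INR a * dl) <= Rpower (INR k) (eps / 2))
    by (apply Rle_Rpower; lra).
  replace (Rpower (INR k) eps) with (Rpower (INR k) (eps / 2) * Rpower (INR k) (eps / 2))
    by (rewrite <- Rpower_plus; f_equal; field).
  pose proof (Rmax_l 0 (C * B ^ a)). pose proof (Rmax_r 0 (C * B ^ a)).
  pose proof (pow_le (log_factor k) a ltac:(pose proof (log_factor_ge_1 k); lra)).
  pose proof (Rpower_pos (INR k) (INR a * dl)).
  assert (Hbound : C * log_factor k ^ a <= Rmax 0 (C * B ^ a) * Rpower (INR k) (INR a * dl)).
  { destruct (Rle_or_lt C 0) as [HC|HC]; [nra|].
    apply Rle_trans with (C * (B ^ a * Rpower (INR k) (INR a * dl)));
      [apply Rmult_le_compat_l; lra|].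
    rewrite <- Rmult_assoc. apply Rmult_le_compat_r; lra. }
  apply Rle_trans with (1 := Hbound). apply Rmult_le_compat; lra.
Qed.

(** * The recursive construction *)

Lemma INR_div_mul_le a u : (0 < u)%nat -> INR (a / u) * INR u <= INR a.
Proof. intros Hu. rewrite <- mult_INR. apply le_INR. pose proof (Nat.div_mod_eq a u). nia. Qed.

Lemma INR_div_ge_half a u : (0 < u)%nat -> 4 * INR u <= INR a ->
  (2 <= a / u)%nat /\ INR a <= 2 * INR u * INR (a / u).
Proof.
  intros Hu Ha.
  assert (Hur : 0 < INR u) by (apply lt_0_INR; lia).
  assert (Hlt : INR a < INR u * (INR (a / u) + 1)).
  { pose proof (Nat.div_mod_eq a u). pose proof (Nat.mod_upper_bound a u ltac:(lia)).
    rewrite <- S_INR, <- mult_INR. apply lt_INR. nia. }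
  assert (Hq : 2 <= INR (a / u)) by nra.
  split; [apply INR_le; simpl; lra|nra].
Qed.

Lemma log_term_small R1 k lam : (1 <= R1)%nat -> (1 <= lam)%nat ->
  INR lam * (46 * INR R1 * INR R1 * log_factor k) <= INR k ->
  23 * INR R1 * INR R1 * INR lam * (1 + ln (INR lam)) <= INR k / 2.
Proof.
  intros HR Hlam Hk.
  assert (HRr : 1 <= INR R1) by (apply (le_INR 1); lia).
  assert (Hlamr : 1 <= INR lam) by (apply (le_INR 1); lia).
  pose proof (log_factor_ge_1 k).
  assert (Hlamk : INR lam <= INR k).
  { assert (1 <= 46 * INR R1 * INR R1 * log_factor k) by nra. nra. }
  assert (Hk1 : (1 <= k)%nat) by (apply INR_le; simpl; lra).
  assert (ln (INR lam) <= ln (INR k)).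
  { destruct (Rle_lt_or_eq_dec _ _ Hlamk) as [Hlt|Heq]; [left; apply ln_increasing; lra|].
    rewrite Heq. lra. }
  pose proof (ln_le_log2_succ k Hk1).
  assert (1 + ln (INR lam) <= log_factor k) by (unfold log_factor; rewrite plus_INR; simpl; lra).
  assert (0 <= 23 * INR R1 * INR R1 * INR lam) by nra.
  assert (23 * INR R1 * INR R1 * INR lam * (1 + ln (INR lam))
          <= 23 * INR R1 * INR R1 * INR lam * log_factor k) by (apply Rmult_le_compat_l; lra).
  lra.
Qed.

Lemma power_step_bound (x k' g g' lam M N C A R1 : R) (e f : nat) :
  0 <= C -> 1 <= g' <= g -> 0 <= x -> 0 < R1 -> 0 <= A -> 0 <= lam -> 0 <= M ->
  x <= 4 * R1 * k' -> k' ^ e <= C * M * g' ^ f ->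
  x <= 2 * A * g * lam -> lam * lam * M <= 4 * N ->
  x ^ (e + 2) <= 4 * C * (2 * A) ^ 2 * (4 * R1) ^ e * N * g ^ (f + 2).
Proof.
  intros HC Hg Hx HR HA Hlam HM Hk' Hind Hxlam Hlam2.
  assert (Hxe : x ^ e <= (4 * R1) ^ e * (C * M * g ^ f)).
  { apply Rle_trans with ((4 * R1 * k') ^ e); [apply pow_incr; lra|].
    rewrite Rpow_mult_distr. apply Rmult_le_compat_l; [apply pow_le; lra|].
    apply Rle_trans with (1 := Hind). apply Rmult_le_compat_l; [nra|].
    apply pow_incr. lra. }
  assert (Hx2 : x ^ 2 <= (2 * A * g * lam) ^ 2) by (apply pow_incr; lra).
  pose proof (pow_le x e Hx). pose proof (pow_le (4 * R1) e ltac:(lra)).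
  pose proof (pow_le g f ltac:(lra)).
  rewrite pow_add.
  apply Rle_trans with (((4 * R1) ^ e * (C * M * g ^ f)) * (2 * A * g * lam) ^ 2).
  { apply Rmult_le_compat; try lra. apply pow_le. lra. }
  replace (((4 * R1) ^ e * (C * M * g ^ f)) * (2 * A * g * lam) ^ 2)
    with ((C * (2 * A) ^ 2 * (4 * R1) ^ e * g ^ (f + 2)) * (lam * lam * M))
    by (rewrite pow_add; ring).
  replace (4 * C * (2 * A) ^ 2 * (4 * R1) ^ e * N * g ^ (f + 2))
    with ((C * (2 * A) ^ 2 * (4 * R1) ^ e * g ^ (f + 2)) * (4 * N)) by ring.
  apply Rmult_le_compat_l; [|lra].
  repeat apply Rmult_le_pos; try apply pow_le; lra.
Qed.

Definition dense_wave_free (r : nat) (C : R) (K : nat) : Prop :=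
  forall k, (K <= k)%nat -> exists N col, (1 <= N)%nat /\ wave_free r k N col /\
    INR k ^ (2 * r - 1) <= C * INR N * log_factor k ^ (2 * r - 2).

Lemma dense_wave_free_one : dense_wave_free 1 2 2.
Proof.
  intros k Hk. exists (k - 1)%nat, (fun _ => 0%nat). split; [lia|]. split.
  - apply wave_free_one_color. lia.
  - simpl. rewrite minus_INR by lia. simpl. assert (2 <= INR k) by (apply (le_INR 2); lia). lra.
Qed.

(* From a coloring for r colors and length k / (2 (r + 1)), the cell construction
   with lam ~ k / (46 (r + 1)^2 log k) gains a factor lam^2 in N. *)
Lemma dense_wave_free_succ r C K : (1 <= r)%nat -> 0 < C -> dense_wave_free r C K ->
  exists C' K', 0 < C' /\ dense_wave_free (S r) C' K'.
Proof.
  intros Hr HC Hdense.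
  set (A1 := (46 * S r * S r)%nat).
  assert (HA1 : INR A1 = 46 * INR (S r) * INR (S r)).
  { unfold A1. rewrite !mult_INR. replace (INR 46) with 46 by (simpl; lra). reflexivity. }
  assert (HR : 2 <= INR (S r)) by (apply (le_INR 2); lia).
  destruct (polylog_le_Rpower 1 (4 * INR A1) 1 ltac:(lra)) as [Kg HKg].
  exists (4 * C * (2 * INR A1) ^ 2 * (4 * INR (S r)) ^ (2 * r - 1)), (Kg + 2 * S r * (K + 4))%nat.
  split; [repeat apply Rmult_lt_0_compat; try apply pow_lt; nra|].
  intros k Hk.
  assert (Hlog : 4 * INR A1 * log_factor k <= INR k).
  { specialize (HKg k ltac:(lia)). rewrite pow_1, Rpower_1 in HKg by (apply lt_0_INR; lia).
    exact HKg. }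
  set (k' := (k / (2 * S r))%nat).
  destruct (INR_div_ge_half k (2 * S r) ltac:(lia)) as [_ Hk'].
  { replace 4 with (INR 4) by (simpl; lra). rewrite <- mult_INR. apply le_INR. nia. }
  fold k' in Hk'.
  destruct (Hdense k' ltac:(unfold k'; apply Nat.div_le_lower_bound; nia))
    as [M [col' [HM [Hfree' Hbound']]]].
  set (u := (A1 * (Nat.log2 k + 2))%nat).
  assert (Hu : INR u = INR A1 * log_factor k) by apply mult_INR.
  set (lam := (k / u)%nat).
  destruct (INR_div_ge_half k u ltac:(unfold u, A1; lia) ltac:(rewrite Hu; lra)) as [Hlam2 Hlam_lo].
  pose proof (INR_div_mul_le k u ltac:(unfold u, A1; lia)) as Hlam_hi. fold lam in Hlam_lo, Hlam_hi.
  set (N := (lam * lam * M / 2)%nat).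
  pose proof (Nat.Div0.mul_div_le (lam * lam * M) 2) as HN_lo.
  pose proof (Nat.mul_succ_div_gt (lam * lam * M) 2 ltac:(lia)) as HN_hi. fold N in HN_lo, HN_hi.
  exists N, (cell_coloring (quadratic_cell M N) (S r) col'). split; [nia|split].
  - apply (wave_free_step (S r) M N k' k lam col'); try lia.
    + apply Nat.Div0.mul_div_le.
    + replace (S r - 1)%nat with r by lia. exact Hfree'.
    + apply log_term_small; [lia|lia|]. rewrite Hu, HA1 in Hlam_hi. lra.
  - replace (2 * S r - 1)%nat with ((2 * r - 1) + 2)%nat by lia.
    replace (2 * S r - 2)%nat with ((2 * r - 2) + 2)%nat by lia.
    apply (power_step_bound (INR k) (INR k') (log_factor k) (log_factor k') (INR lam) (INR M));
      try apply pos_INR; try lra.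
    + split; [apply log_factor_ge_1|].
      apply log_factor_mono, Nat.Div0.div_le_upper_bound. nia.
    + rewrite mult_INR in Hk'. simpl (INR 2) in Hk'. lra.
    + rewrite Hu in Hlam_lo. lra.
    + rewrite <- !mult_INR. replace 4 with (INR 4) by (simpl; lra). rewrite <- mult_INR.
      apply le_INR. nia.
Qed.

Lemma dense_wave_free_exists r : (1 <= r)%nat -> exists C K, 0 < C /\ dense_wave_free r C K.
Proof.
  induction r as [|r IH]; intros Hr; [lia|].
  destruct (Nat.eq_dec r 0) as [->|Hr0].
  - exists 2, 2%nat. split; [lra|exact dense_wave_free_one].
  - destruct (IH ltac:(lia)) as [C [K [HC HK]]].
    exact (dense_wave_free_succ r C K ltac:(lia) HC HK).
Qed.

Lemma AW_ge_of_wave_free r k N col x : wave_free r k N col -> x <= INR N -> AW_ge k r x.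
Proof.
  intros [Hcol Hfree] Hx N0 HN0 Hprop.
  destruct (le_lt_dec N N0) as [HN|HN]; [apply le_INR in HN; lra|exfalso].
  destruct (Hprop col (fun y Hy => Hcol y ltac:(lia))) as [w [Hw [Hbounded Hmono]]].
  assert (k < k)%nat; [|lia].
  apply (Hfree k w Hw); intros i Hi; [specialize (Hbounded i Hi); lia|apply Hmono; lia].
Qed.

Lemma Rpower_sub_le x n eps N : 1 <= x -> x ^ n <= N * Rpower x eps -> Rpower x (INR n - eps) <= N.
Proof.
  intros Hx Hn. pose proof (Rpower_pos x eps).
  apply (Rmult_le_reg_r (Rpower x eps)); [lra|].
  rewrite <- Rpower_plus. replace (INR n - eps + eps) with (INR n) by ring.
  rewrite Rpower_pow by lra. exact Hn.
Qed.

Theorem theorem2 :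
  forall (r : nat), (1 <= r)%nat ->
  forall eps : R, 0 < eps ->
  exists K : nat, forall k : nat, (K <= k)%nat ->
    AW_ge k r
      (Rpower (INR k) (2 * INR r - 1 - eps) /
       (2 ^ (r - 1) * (40 * INR r) ^ (r * r - 1))).
Proof.
  intros r Hr eps Heps.
  destruct (dense_wave_free_exists r Hr) as [C [K1 [HC Hdense]]].
  destruct (polylog_le_Rpower (2 * r - 2) C eps Heps) as [K2 Hpolylog].
  exists (K1 + K2 + 1)%nat. intros k Hk.
  destruct (Hdense k ltac:(lia)) as [N [col [HN [Hfree Hbound]]]].
  apply (AW_ge_of_wave_free r k N col _ Hfree).
  assert (Hk1 : 1 <= INR k) by (apply (le_INR 1); lia).
  assert (Hmain : Rpower (INR k) (2 * INR r - 1 - eps) <= INR N).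
  { replace (2 * INR r - 1) with (INR (2 * r - 1))
      by (rewrite minus_INR, mult_INR by lia; simpl; ring).
    apply Rpower_sub_le; [lra|].
    specialize (Hpolylog k ltac:(lia)). pose proof (pos_INR N). nra. }
  assert (Hden : 1 <= 2 ^ (r - 1) * (40 * INR r) ^ (r * r - 1)).
  { assert (1 <= INR r) by (apply (le_INR 1); lia).
    pose proof (pow_R1_Rle 2 (r - 1) ltac:(lra)).
    pose proof (pow_R1_Rle (40 * INR r) (r * r - 1) ltac:(lra)).
    nra. }
  pose proof (Rpower_pos (INR k) (2 * INR r - 1 - eps)).
  apply Rle_trans with (2 := Hmain).
  apply (Rmult_le_reg_r (2 ^ (r - 1) * (40 * INR r) ^ (r * r - 1))); [lra|].
  unfold Rdiv. rewrite Rmult_assoc, Rinv_l by lra. nra.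
Qed.
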